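(* Let $n\ge 1$ and consider the order structure on the keys $[n]=\{1,\dots,n\}$, whose ranges are all intervals $\{i_1,i_1+1,\dots,i_2\}$ with $1\le i_1\le i_2\le n$. (i) For every vector $p=(p_1,\dots,p_n)\in[0,1]^n$ with $\sum_{i=1}^n p_i$ an integer, there exists a VarOpt sample distribution for $p$ whose maximum range discrepancy (with respect to intervals) satisfies $\Delta\le 2$. (ii) For every fixed real number $\Delta<2$, there exist $n$ and a vector $p\in[0,1]^n$ with $\sum_i p_i$ an integer such that no VarOpt sample distribution for $p$ has maximum range discrepancy (with respect to intervals) at most $\Delta$.
   Context: Given $p=(p_1,\dots,p_n)\in[0,1]^n$ with $s=\sum_i p_i$ an integer (in the paper the $p_i$ are the IPPS inclusion probabilities $p_i=\min\{1,w_i/\tau\}$ of weighted keys), a sample distribution is a probability distribution over subsets $S\subseteq[n]$. It is called VarOpt for $p$ if: (a) $\Pr[i\in S]=p_i$ for every $i$; (b) $|S|=s$ with probability one; (c) for every $J\subseteq[n]$, $\Pr[J\subseteq S]\le\prod_{i\in J}p_i$ and $\Pr[J\cap S=\emptyset]\le\prod_{i\in J}(1-p_i)$. For a family of ranges $\mathcal{R}$ (subsets of $[n]$), the maximum range discrepancy of a sample distribution $\Omega$ is $\Delta=\max_{S\in\operatorname{supp}\Omega}\max_{R\in\mathcal{R}}\big|\,|S\cap R|-\sum_{i\in R}p_i\,\big|$. *)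

From HB Require Import structures.
From mathcomp Require Import all_boot all_order all_algebra.
From mathcomp Require Import reals.
Set Implicit Arguments. Unset Strict Implicit. Unset Printing Implicit Defensive.
Import Order.TTheory GRing.Theory Num.Theory.
Local Open Scope ring_scope.

Section VarOpt.
Variables (R : realType) (n : nat).

Definition valid_probs (p : 'I_n -> R) : Prop :=
  (forall i, 0 <= p i <= 1) /\ exists s : nat, \sum_i p i = s%:R.

Definition is_sample_distr (mu : {set 'I_n} -> R) : Prop :=
  (forall S, 0 <= mu S) /\ \sum_S mu S = 1.

Definition Pr (mu : {set 'I_n} -> R) (E : pred {set 'I_n}) : R :=
  \sum_(S | E S) mu S.

Definition is_varopt (mu : {set 'I_n} -> R) (p : 'I_n -> R) : Prop :=
  [/\ (forall i, Pr mu (fun S => i \in S) = p i),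
      Pr mu (fun S => #|S|%:R != \sum_i p i) = 0 &
      (forall J : {set 'I_n},
          Pr mu (fun S => J \subset S) <= \prod_(i in J) p i /\
          Pr mu (fun S => [disjoint J & S]) <= \prod_(i in J) (1 - p i))].

(* the interval range {i1, ..., i2} (0-indexed) *)
Definition interval (i1 i2 : nat) : {set 'I_n} :=
  [set i : 'I_n | (i1 <= i)%N && (i <= i2)%N].

Definition interval_disc_le (mu : {set 'I_n} -> R) (p : 'I_n -> R) (D : R) : Prop :=
  forall S, mu S != 0 -> forall i1 i2 : nat, (i1 <= i2 < n)%N ->
    `| #|S :&: interval i1 i2|%:R - \sum_(i in interval i1 i2) p i | <= D.

End VarOpt.

From Pilot Require Import Defs.
From HB Require Import structures.
From mathcomp Require Import all_boot all_order all_algebra.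
From mathcomp Require Import reals.
From mathcomp Require Import zify ring lra.
Import Order.TTheory GRing.Theory Num.Theory.

Set Implicit Arguments. Unset Strict Implicit. Unset Printing Implicit Defensive.
Local Open Scope ring_scope.

(* (i) Pivotal sampling, scanning the keys from left to right.  Each step takes the two
   leftmost fractional entries a < b and moves mass between them, up or down with
   probabilities that keep the mean, until one of them becomes 0 or 1.  Such a step keeps
   the marginals and the negative correlation bounds.  As every entry before b other than a
   is integral, a prefix sum changed by the step only sees the fractional part of y a move
   inside [0, 1], so by induction every prefix count of a sample is within 1 of the prefix
   sum of p, and every interval count within 2.
   (ii) Take n = K^3 keys with p_i = 1/K and D < 2 - 2/K.  A sample with interval
   discrepancy at most D misses a whole residue class mod K.  By negative correlation a
   class of K^2 keys is missed with probability at most (1 - 1/K)^(K^2) < 1/K, so the K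
   classes cannot cover the support. *)

Section Prefixes.
Variable n : nat.
Implicit Types (S : {set 'I_n}) (i : 'I_n).

Definition prefix_card S (m : nat) : nat := #|[set i in S | (i < m)%N]|.

Lemma prefix_cardS S i : prefix_card S i.+1 = (prefix_card S i + (i \in S))%N.
Proof.
rewrite /prefix_card; case: (boolP (i \in S)) => iS.
  have -> : [set j in S | (j < i.+1)%N] = i |: [set j in S | (j < i)%N].
    apply/setP => j; rewrite !inE ltnS leq_eqVlt.
    by case: (eqVneq j i) => [->|]; rewrite ?iS ?eqxx // -val_eqE /= => /negbTE ->.
  by rewrite cardsU1 !inE ltnn andbF addn1.
rewrite addn0; apply: eq_card => j; rewrite !inE ltnS leq_eqVlt.
by case: (eqVneq j i) => [->|]; rewrite ?(negbTE iS) // -val_eqE /= => /negbTE ->.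
Qed.

Lemma prefix_card_full S m : (n <= m)%N -> prefix_card S m = #|S|.
Proof.
move=> le; apply: eq_card => j; rewrite !inE.
by rewrite (leq_trans (ltn_ord j) le) andbT.
Qed.

Lemma leq_prefix_card S a b : (a <= b)%N -> (prefix_card S a <= prefix_card S b)%N.
Proof.
move=> le; apply: subset_leq_card; apply/subsetP => j; rewrite !inE.
by case/andP=> -> /leq_trans ->.
Qed.

Lemma card_setI_interval S (i1 i2 : nat) : (i1 <= i2.+1)%N ->
  #|S :&: Defs.interval n i1 i2| = (prefix_card S i2.+1 - prefix_card S i1)%N.
Proof.
move=> le; rewrite /prefix_card.
have sub : [set i in S | (i < i1)%N] \subset [set i in S | (i < i2.+1)%N].
  by apply/subsetP => j; rewrite !inE => /andP[-> /leq_trans]; apply.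
rewrite -(cardsID [set i in S | (i < i1)%N] [set i in S | (i < i2.+1)%N]).
rewrite (setIidPr sub) addKn; apply: eq_card => j; rewrite !inE ltnS.
by case: (j \in S) => //=; rewrite -leqNgt andbC.
Qed.

Lemma card_interval (i1 i2 : nat) : (i1 <= i2.+1)%N -> (i2 < n)%N ->
  #|Defs.interval n i1 i2| = (i2.+1 - i1)%N.
Proof.
move=> le lt; rewrite -(setTI (Defs.interval n i1 i2)) card_setI_interval //.
suff prefix_setT m : (m <= n)%N -> prefix_card [set: 'I_n] m = m.
  by rewrite !prefix_setT // (leq_trans le).
elim: m => [|m IH] mn.
  by apply/eqP; rewrite cards_eq0; apply/eqP/setP => j; rewrite !inE.
by rewrite (prefix_cardS _ (Ordinal mn)) inE IH ?addn1 // ltnW.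
Qed.

Section RealPrefix.
Variable R : realType.
Implicit Types (y : 'I_n -> R).

Definition prefix_sum y (m : nat) : R := \sum_(i : 'I_n | (i < m)%N) y i.

Lemma sum_interval y (i1 i2 : nat) : (i1 <= i2.+1)%N ->
  \sum_(i in Defs.interval n i1 i2) y i = prefix_sum y i2.+1 - prefix_sum y i1.
Proof.
move=> le; apply/eqP; rewrite eq_sym subr_eq addrC /prefix_sum.
rewrite (bigID (fun i : 'I_n => (i < i1)%N)) /=; apply/eqP; congr (_ + _).
  by apply: eq_bigl => i; case: (ltnP i i1) => h; rewrite ?andbF ?andbT // (leq_trans h le).
by apply: eq_bigl => i; rewrite inE ltnS -leqNgt andbC.
Qed.

Lemma interval_disc_of_prefix_disc y S :
  (forall m, `|(prefix_card S m)%:R - prefix_sum y m| < 1) ->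
  forall i1 i2 : nat, (i1 <= i2)%N ->
  `|#|S :&: Defs.interval n i1 i2|%:R - \sum_(i in Defs.interval n i1 i2) y i| < 2.
Proof.
move=> h i1 i2 le; have le' : (i1 <= i2.+1)%N by apply: leqW.
rewrite card_setI_interval // sum_interval // natrB ?leq_prefix_card //.
have := h i2.+1; have := h i1; rewrite !ltr_norml => /andP[? ?] /andP[? ?].
apply/andP; split; lra.
Qed.

End RealPrefix.
End Prefixes.

(* With [al + be * t] standing for [t] and for [1 - t]: both pivot outcomes average to
   the current pair, and their products average to the current product minus
   [be^2 * d1 * d2]. *)
Lemma pivot_moments (F : realFieldType) (al be d1 d2 x z : F) :
  0 <= d1 -> 0 <= d2 -> 0 < d1 + d2 ->
  let w := d2 / (d1 + d2) in
  [/\ w * (al + be * (x + d1)) + (1 - w) * (al + be * (x - d2)) = al + be * x,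
      w * (al + be * (z - d1)) + (1 - w) * (al + be * (z + d2)) = al + be * z &
      w * ((al + be * (x + d1)) * (al + be * (z - d1)))
        + (1 - w) * ((al + be * (x - d2)) * (al + be * (z + d2)))
      <= (al + be * x) * (al + be * z)].
Proof.
move=> d10 d20 d0 w.
have -> : 1 - w = d1 / (d1 + d2) by rewrite /w; field; lra.
rewrite /w; split; try by field; lra.
rewrite -subr_ge0.
have -> : (al + be * x) * (al + be * z)
    - (d2 / (d1 + d2) * ((al + be * (x + d1)) * (al + be * (z - d1)))
       + d1 / (d1 + d2) * ((al + be * (x - d2)) * (al + be * (z + d2))))
    = be ^+ 2 * (d1 * d2) by field; lra.
by rewrite mulr_ge0 ?sqr_ge0 ?mulr_ge0.
Qed.

Lemma near_nat_shift (F : realFieldType) (c N : nat) (t u : F) :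
  0 <= t <= 1 -> 0 < u < 1 ->
  `|c%:R - (N%:R + t)| < 1 -> `|c%:R - (N%:R + u)| < 1.
Proof.
move=> /andP[t0 t1] /andP[u0 u1]; rewrite !ltr_norml => /andP[lo hi].
have : (N < c + 1)%N by rewrite -(ltr_nat F) natrD; lra.
have : (c < N + 2)%N by rewrite -(ltr_nat F) natrD; lra.
move=> cN2 Nc1; have [->|->] : c = N \/ c = (N + 1)%N by lia.
  by apply/andP; split; lra.
by rewrite natrD; apply/andP; split; lra.
Qed.

Section Mixtures.
Variables (R : realType) (n : nat).
Implicit Types (mu : {set 'I_n} -> R) (S T : {set 'I_n}).

Definition mix (w : R) mu1 mu2 : {set 'I_n} -> R := fun S => w * mu1 S + (1 - w) * mu2 S.

Definition point_distr T : {set 'I_n} -> R := fun S => (S == T)%:R.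

Lemma Pr_mix w mu1 mu2 (E : pred {set 'I_n}) :
  Pr (mix w mu1 mu2) E = w * Pr mu1 E + (1 - w) * Pr mu2 E.
Proof. by rewrite /Pr big_split /= -!mulr_sumr. Qed.

Lemma mix_sample_distr w mu1 mu2 : 0 <= w <= 1 ->
  is_sample_distr mu1 -> is_sample_distr mu2 -> is_sample_distr (mix w mu1 mu2).
Proof.
move=> /andP[w0 w1] [mu10 mu11] [mu20 mu21]; split.
  by move=> S; apply: addr_ge0; apply: mulr_ge0; rewrite ?subr_ge0.
by rewrite big_split /= -!mulr_sumr mu11 mu21 !mulr1 addrC subrK.
Qed.

Lemma mix_neq0 w mu1 mu2 S : mix w mu1 mu2 S != 0 -> mu1 S != 0 \/ mu2 S != 0.
Proof.
rewrite /mix; case: (eqVneq (mu1 S) 0) => [->|]; last by left.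
by case: (eqVneq (mu2 S) 0) => [->|]; [rewrite !mulr0 addr0 eqxx | right].
Qed.

Lemma Pr_point T (E : pred {set 'I_n}) : Pr (point_distr T) E = (E T)%:R.
Proof.
rewrite /Pr; case ET: (E T).
  rewrite (bigD1 T) //= /point_distr eqxx big1 ?addr0 // => S /andP[_ ST].
  by rewrite (negbTE ST).
by rewrite big1 // => S ES; rewrite /point_distr; case: eqP => // ST; rewrite -ST ES in ET.
Qed.

End Mixtures.

Arguments point_distr {R n} T S.

Section Pivot.
Variables (R : realType) (n : nat).
Implicit Types (y : 'I_n -> R) (a b i j : 'I_n) (S J : {set 'I_n}).

Definition fractional y i : bool := (0 < y i) && (y i < 1).

Definition num_fractional y : nat := #|[set i | fractional y i]|.

Definition first_fractional y : option 'I_n :=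
  [pick a | fractional y a & [forall j : 'I_n, (j < a)%N ==> ~~ fractional y j]].

Definition next_fractional y a : option 'I_n :=
  [pick b | fractional y b &
            (a < b)%N && [forall j : 'I_n, ((a < j) && (j < b))%N ==> ~~ fractional y j]].

Lemma first_fractional_None y : first_fractional y = None -> forall i, ~~ fractional y i.
Proof.
rewrite /first_fractional; case: pickP => // none _ i; apply/negP => fi.
case: (arg_minnP (fun j : 'I_n => val j) fi) => m fm minm.
move/negbT/negP: (none m); rewrite fm; apply; apply/forallP => j.
by apply/implyP => jm; apply/negP => /minm; rewrite leqNgt jm.
Qed.

Lemma first_fractional_Some y a : first_fractional y = Some a -> fractional y a.
Proof. by rewrite /first_fractional; case: pickP => // a' /andP[fa _] [<-]. Qed.

Lemma next_fractional_None y a : first_fractional y = Some a ->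
  next_fractional y a = None -> forall j, j != a -> ~~ fractional y j.
Proof.
rewrite /first_fractional /next_fractional.
case: pickP => // a' /andP[fa /forallP before_a] [<-] {a}.
case: pickP => // none _ j ja; apply/negP => fj.
have aj : (a' < j)%N.
  case: ltngtP => // [ja'|/val_inj eja]; last by rewrite eja eqxx in ja.
  by move: (implyP (before_a j) ja'); rewrite fj.
have Pj : fractional y j && (a' < j)%N by rewrite fj aj.
case: (@arg_minnP _ j (fun k => fractional y k && (a' < k)%N) val Pj) => m /andP[fm am] minm.
move/negbT/negP: (none m); rewrite fm am; apply; apply/forallP => k.
apply/implyP => /andP[ak km]; apply/negP => fk.
by move: (minm k); rewrite fk ak leqNgt km => /(_ isT).
Qed.

Lemma leading_fractional_pair y a b :
  first_fractional y = Some a -> next_fractional y a = Some b ->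
  [/\ fractional y a, fractional y b, (a < b)%N &
      forall j, (j < b)%N -> j != a -> ~~ fractional y j].
Proof.
rewrite /first_fractional /next_fractional.
case: pickP => // a' /andP[fa /forallP before_a] [<-] {a}.
case: pickP => // b' /and3P[fb ab /forallP between] [<-] {b}.
split=> // j jb ja; case: (ltngtP j a') => [ja'|aj|/val_inj eja].
- exact: (implyP (before_a j)).
- by apply: (implyP (between j)); rewrite aj.
- by rewrite eja eqxx in ja.
Qed.

Lemma integral_val y i : 0 <= y i <= 1 -> ~~ fractional y i -> y i = (y i == 1)%:R.
Proof.
rewrite /fractional negb_and -!leNgt => /andP[y0 y1] h.
case: eqP => [->|/eqP ne] //=; apply/le_anti; rewrite y0 andbT.
by case/orP: h => // h; move: ne; rewrite eq_le y1 h.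
Qed.

Lemma fractional_not_single y a : valid_probs y -> fractional y a ->
  ~ (forall j, j != a -> ~~ fractional y j).
Proof.
move=> [y01 [s sum_s]] fa others; move: sum_s; rewrite (bigD1 a) //=.
have -> : \sum_(i | i != a) y i = (\sum_(i | i != a) nat_of_bool (y i == 1%R))%:R.
  rewrite natr_sum; apply: eq_bigr => i ia.
  by apply: integral_val; [exact: y01 | exact: others].
move: (\sum_(i | i != a) _)%N fa => N /andP[ya0 ya1] sum_s.
have : (N < s)%N by rewrite -(ltr_nat R); lra.
have : (s < N + 1)%N by rewrite -(ltr_nat R) natrD; lra.
lia.
Qed.

Definition update2 y a b (ta tb : R) : 'I_n -> R :=
  fun i => if i == a then ta else if i == b then tb else y i.

Lemma update2_id y a b : update2 y a b (y a) (y b) =1 y.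
Proof. by move=> i; rewrite /update2; case: eqP => [->|_] //; case: eqP => [->|]. Qed.

Lemma sum_update2 (P : pred 'I_n) y a b ta tb : a != b ->
  \sum_(i | P i) update2 y a b ta tb i =
  \sum_(i | P i) y i + (if P a then ta - y a else 0) + (if P b then tb - y b else 0).
Proof.
move=> ab; rewrite big_mkcond [in RHS]big_mkcond (bigD1 a) //= (bigD1 b) 1?eq_sym //=.
rewrite [in RHS](bigD1 a) //= [in RHS](bigD1 b) 1?eq_sym //=.
rewrite /update2 eqxx eq_sym (negbTE ab) eqxx.
rewrite (eq_bigr (fun i => if P i then y i else 0)); last first.
  by move=> i /andP[/negbTE -> /negbTE ->].
by case: (P a); case: (P b); ring.
Qed.

Lemma prod_update2 (G : R -> R) y a b ta tb J : a != b ->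
  \prod_(i in J) G (update2 y a b ta tb i) =
  (if a \in J then G ta else 1) * ((if b \in J then G tb else 1) *
    \prod_(i | (i != a) && (i != b)) (if i \in J then G (y i) else 1)).
Proof.
move=> ab; rewrite big_mkcond (bigD1 a) //= (bigD1 b) 1?eq_sym //=.
rewrite /update2 eqxx eq_sym (negbTE ab) eqxx.
by congr (_ * (_ * _)); apply: eq_bigr => i /andP[/negbTE -> /negbTE ->].
Qed.

Lemma mix_prod_update2_le (G : R -> R) y a b J (w s1 t1 s2 t2 : R) :
  a != b -> 0 <= w <= 1 -> (forall i, 0 <= G (y i)) ->
  w * G s1 + (1 - w) * G s2 = G (y a) ->
  w * G t1 + (1 - w) * G t2 = G (y b) ->
  w * (G s1 * G t1) + (1 - w) * (G s2 * G t2) <= G (y a) * G (y b) ->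
  w * \prod_(i in J) G (update2 y a b s1 t1 i)
    + (1 - w) * \prod_(i in J) G (update2 y a b s2 t2 i)
  <= \prod_(i in J) G (y i).
Proof.
move=> ab /andP[w0 w1] G0 mean_a mean_b mean_ab.
rewrite -(eq_bigr _ (fun i _ => congr1 G (update2_id y a b i))) !prod_update2 //.
set c := \prod_(i | _) _.
have c0 : 0 <= c by apply: prodr_ge0 => i _; case: ifP.
case: (a \in J); case: (b \in J); rewrite ?mul1r.
- by rewrite !mulrA -mulrDl ler_wpM2r // -!mulrA.
- by rewrite !mulrA -!mulrDl mean_a.
- by rewrite !mulrA -!mulrDl mean_b.
- by rewrite -mulrDl addrC subrK mul1r.
Qed.

Definition prefix_balanced y S : Prop :=
  #|S|%:R = \sum_i y i /\ forall m, `|(prefix_card S m)%:R - prefix_sum y m| < 1.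

Lemma prefix_balanced_update2 y a b ta tb S :
  (forall i, 0 <= y i <= 1) -> fractional y a -> (a < b)%N ->
  (forall j, (j < b)%N -> j != a -> ~~ fractional y j) ->
  0 <= ta <= 1 -> ta + tb = y a + y b ->
  prefix_balanced (update2 y a b ta tb) S -> prefix_balanced y S.
Proof.
move=> y01 fa ab before_b ta01 tab [card_S bal].
have anb : a != b by apply/eqP => eab; rewrite eab ltnn in ab.
split; first by rewrite card_S (sum_update2 predT) //=; lra.
move=> m; move: (bal m); rewrite /prefix_sum (sum_update2 (fun i : 'I_n => (i < m)%N)) //=.
case: (ltnP b m) => bm.
  rewrite (ltn_trans ab bm).
  by have -> : forall s : R, s + (ta - y a) + (tb - y b) = s by move=> s; lra.
case: (ltnP a m) => am; last by rewrite !addr0.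
rewrite addr0 (bigD1 a) //=.
have -> : \sum_(i : 'I_n | (i < m)%N && (i != a)) y i
    = (\sum_(i : 'I_n | (i < m)%N && (i != a)) nat_of_bool (y i == 1%R))%:R.
  rewrite natr_sum; apply: eq_bigr => i /andP[im ia].
  by apply: integral_val => //; apply: before_b => //; apply: leq_trans im bm.
move: (\sum_(i | _) _)%N => N.
have -> : y a + N%:R + (ta - y a) = N%:R + ta by ring.
by rewrite (addrC (y a)); apply: near_nat_shift.
Qed.

Definition neg_correlated (mu : {set 'I_n} -> R) y : Prop := forall J,
  Pr mu (fun S => J \subset S) <= \prod_(i in J) y i /\
  Pr mu (fun S => [disjoint J & S]) <= \prod_(i in J) (1 - y i).

Definition pivotal_sample (mu : {set 'I_n} -> R) y : Prop :=
  [/\ is_sample_distr mu, forall i, Pr mu (fun S => i \in S) = y i,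
      neg_correlated mu y & forall S, mu S != 0 -> prefix_balanced y S].

Definition ones y : {set 'I_n} := [set i | y i == 1].

Lemma point_pivotal_sample y : (forall i, 0 <= y i <= 1) -> (forall i, ~~ fractional y i) ->
  pivotal_sample (point_distr (ones y)) y.
Proof.
move=> y01 integral.
have y_ones i : y i = (i \in ones y)%:R by rewrite inE; apply: integral_val.
have sum_ones (P : pred 'I_n) : \sum_(i | P i) y i = #|[set i in ones y | P i]|%:R.
  rewrite (eq_bigr _ (fun i _ => y_ones i)) -natr_sum -sum1_card big_mkcond /=.
  congr _%:R; rewrite [RHS]big_mkcond; apply: eq_bigr => i _.
  by rewrite !inE; case: (P i); rewrite ?andbT ?andbF.
split.
- by split=> [S|]; rewrite ?ler0n // -[\sum_S _]/(Pr _ predT) Pr_point.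
- by move=> i; rewrite Pr_point y_ones.
- move=> J; rewrite !Pr_point; split.
    case: (boolP (J \subset ones y)) => [sub|_]; last first.
      by apply: prodr_ge0 => i _; case/andP: (y01 i).
    by rewrite big1 // => i /(subsetP sub) iJ; rewrite y_ones iJ.
  case: (boolP [disjoint J & ones y]) => [dis|_]; last first.
    by apply: prodr_ge0 => i _; rewrite subr_ge0; case/andP: (y01 i).
  by rewrite big1 // => i iJ; rewrite y_ones (disjointFr dis iJ) subr0.
- move=> S; rewrite /point_distr.
  case: (eqVneq S (ones y)) => [-> _|_]; last by rewrite eqxx.
  split=> [|m].
    by rewrite sum_ones; congr _%:R; apply: eq_card => i; rewrite !inE andbT.
  by rewrite /prefix_sum sum_ones subrr normr0 ltr01.
Qed.

Definition pivot_up y a b : R := Num.min (1 - y a) (y b).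
Definition pivot_down y a b : R := Num.min (y a) (1 - y b).
Definition pivot_weight y a b : R :=
  pivot_down y a b / (pivot_up y a b + pivot_down y a b).
Definition pivot_raise y a b :=
  update2 y a b (y a + pivot_up y a b) (y b - pivot_up y a b).
Definition pivot_lower y a b :=
  update2 y a b (y a - pivot_down y a b) (y b + pivot_down y a b).

Lemma pivot_upP y a b : fractional y a -> fractional y b ->
  [/\ 0 < pivot_up y a b, pivot_up y a b <= 1 - y a, pivot_up y a b <= y b &
      pivot_up y a b = 1 - y a \/ pivot_up y a b = y b].
Proof.
move=> /andP[? ?] /andP[? ?]; rewrite /pivot_up /Num.min.
by case: (ltP (1 - y a) (y b)) => h /=; split; try lra; first [by left | by right].
Qed.

Lemma pivot_downP y a b : fractional y a -> fractional y b ->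
  [/\ 0 < pivot_down y a b, pivot_down y a b <= y a, pivot_down y a b <= 1 - y b &
      pivot_down y a b = y a \/ pivot_down y a b = 1 - y b].
Proof.
move=> /andP[? ?] /andP[? ?]; rewrite /pivot_down /Num.min.
by case: (ltP (y a) (1 - y b)) => h /=; split; try lra; first [by left | by right].
Qed.

Lemma pivotal_step y a b (d1 d2 : R) mu1 mu2 :
  (forall i, 0 <= y i <= 1) -> fractional y a -> (a < b)%N ->
  (forall j, (j < b)%N -> j != a -> ~~ fractional y j) ->
  0 <= d1 <= 1 - y a -> 0 <= d2 <= y a -> 0 < d1 + d2 ->
  pivotal_sample mu1 (update2 y a b (y a + d1) (y b - d1)) ->
  pivotal_sample mu2 (update2 y a b (y a - d2) (y b + d2)) ->
  pivotal_sample (mix (d2 / (d1 + d2)) mu1 mu2) y.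
Proof.
move=> y01 fa ab before_b /andP[d10 d1a] /andP[d20 d2a] d0.
move=> [dist1 marg1 neg1 bal1] [dist2 marg2 neg2 bal2].
have anb : a != b by apply/eqP => eab; rewrite eab ltnn in ab.
have /andP[ya0 _] := y01 a.
have raise_a : 0 <= y a + d1 <= 1 by apply/andP; split; lra.
have lower_a : 0 <= y a - d2 <= 1 by apply/andP; split; lra.
have [in_a in_b in_ab] := pivot_moments 0 1 (y a) (y b) d10 d20 d0.
have [out_a out_b out_ab] := pivot_moments 1 (-1) (y a) (y b) d10 d20 d0.
rewrite !add0r !mul1r in in_a in_b in_ab; rewrite !mulN1r in out_a out_b out_ab.
set w := d2 / (d1 + d2) in in_a in_b in_ab out_a out_b out_ab *.
have w0 : 0 <= w by rewrite divr_ge0 // ltW.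
have w1 : 0 <= 1 - w by rewrite subr_ge0 ler_pdivrMr // mul1r lerDr.
split.
- by apply: mix_sample_distr => //; rewrite w0 -subr_ge0.
- move=> i; rewrite Pr_mix marg1 marg2 /update2.
  case: eqP => [->|_]; first exact: in_a.
  case: eqP => [->|_]; first exact: in_b.
  by rewrite -mulrDl addrC subrK mul1r.
- move=> J; rewrite !Pr_mix; split.
    apply: le_trans (lerD (ler_wpM2l w0 (neg1 J).1) (ler_wpM2l w1 (neg2 J).1)) _.
    apply: (mix_prod_update2_le (G := fun t => t)) => //; first by rewrite w0 -subr_ge0.
    by move=> i; case/andP: (y01 i).
  apply: le_trans (lerD (ler_wpM2l w0 (neg1 J).2) (ler_wpM2l w1 (neg2 J).2)) _.
  apply: (mix_prod_update2_le (G := fun t => 1 - t)) => //; first by rewrite w0 -subr_ge0.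
  by move=> i; rewrite subr_ge0; case/andP: (y01 i).
- by move=> S /mix_neq0 [/bal1 | /bal2]; apply: prefix_balanced_update2 => //; ring.
Qed.

Lemma update2_progress y a b (ta tb : R) : valid_probs y -> a != b ->
  fractional y a -> fractional y b ->
  0 <= ta <= 1 -> 0 <= tb <= 1 -> ta + tb = y a + y b ->
  ~~ (0 < ta < 1) || ~~ (0 < tb < 1) ->
  valid_probs (update2 y a b ta tb) /\
  (num_fractional (update2 y a b ta tb) < num_fractional y)%N.
Proof.
move=> [y01 [s sum_s]] ab fa fb ta01 tb01 tab settled; split.
  split; first by move=> i; rewrite /update2; case: ifP => _ //; case: ifP.
  by exists s; rewrite (sum_update2 predT) //= sum_s; lra.
apply: proper_card; apply/properP; split.
  apply/subsetP => i; rewrite !inE /fractional /update2.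
  by case: (eqVneq i a) => [->|_] //=; case: (eqVneq i b) => [->|_].
have ba : (b == a) = false by rewrite eq_sym (negbTE ab).
case/orP: settled => settled; [exists a | exists b];
  by rewrite !inE /fractional /update2 ?eqxx ?ba.
Qed.

Lemma pivot_raise_progress y a b : valid_probs y -> a != b ->
  fractional y a -> fractional y b ->
  valid_probs (pivot_raise y a b) /\
  (num_fractional (pivot_raise y a b) < num_fractional y)%N.
Proof.
move=> y_valid ab fa fb; have [d0 da db settled] := pivot_upP fa fb.
move: (fa) (fb) => /andP[? ?] /andP[? ?].
by apply: update2_progress => //; try (apply/andP; split); lra.
Qed.

Lemma pivot_lower_progress y a b : valid_probs y -> a != b ->
  fractional y a -> fractional y b ->
  valid_probs (pivot_lower y a b) /\
  (num_fractional (pivot_lower y a b) < num_fractional y)%N.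
Proof.
move=> y_valid ab fa fb; have [d0 da db settled] := pivot_downP fa fb.
move: (fa) (fb) => /andP[? ?] /andP[? ?].
by apply: update2_progress => //; try (apply/andP; split); lra.
Qed.

(* [k] is fuel: each step settles an entry, so [num_fractional y <= k] suffices. *)
Fixpoint pivotal (k : nat) y : {set 'I_n} -> R :=
  if k is k'.+1 then
    if first_fractional y is Some a then
      if next_fractional y a is Some b then
        mix (pivot_weight y a b) (pivotal k' (pivot_raise y a b))
                                 (pivotal k' (pivot_lower y a b))
      else point_distr (ones y)
    else point_distr (ones y)
  else point_distr (ones y).

Lemma pivotal_sampleP k y : valid_probs y -> (num_fractional y <= k)%N ->
  pivotal_sample (pivotal k y) y.
Proof.
elim: k y => [|k IH] y y_valid count_y.
  apply: point_pivotal_sample; first exact: y_valid.1.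
  move=> i; apply/negP => fi; move: count_y; rewrite leqn0 cards_eq0.
  by move=> /eqP/setP/(_ i); rewrite !inE fi.
case ef: (first_fractional y) => [a|] /=; rewrite ef; last first.
  exact: point_pivotal_sample y_valid.1 (first_fractional_None ef).
case en: (next_fractional y a) => [b|]; last first.
  have fa := first_fractional_Some ef.
  by case: (fractional_not_single y_valid fa (next_fractional_None ef en)).
have [fa fb ab before_b] := leading_fractional_pair ef en.
have anb : a != b by apply/eqP => eab; rewrite eab ltnn in ab.
have [up0 upa _ _] := pivot_upP fa fb; have [down0 downa _ _] := pivot_downP fa fb.
have [raise_valid raise_count] := pivot_raise_progress y_valid anb fa fb.
have [lower_valid lower_count] := pivot_lower_progress y_valid anb fa fb.
apply: pivotal_step (y_valid.1) fa ab before_b _ _ _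
  (IH _ raise_valid _) (IH _ lower_valid _).
- by rewrite (ltW up0).
- by rewrite (ltW down0).
- by rewrite addr_gt0.
- by rewrite -ltnS (leq_trans raise_count).
- by rewrite -ltnS (leq_trans lower_count).
Qed.

End Pivot.

Lemma exists_varopt_interval_disc_le2 (R : realType) (n : nat) (p : 'I_n -> R) :
  valid_probs p ->
  exists mu, [/\ is_sample_distr mu, is_varopt mu p & interval_disc_le mu p 2].
Proof.
move=> p_valid.
have count_p : (num_fractional p <= n)%N.
  by rewrite /num_fractional -[X in (_ <= X)%N](card_ord n) max_card.
have [dist marg neg bal] := pivotal_sampleP p_valid count_p.
exists (pivotal n p); split=> //.
  split=> //; rewrite /Pr big1 // => S wrong_size.
  case: (eqVneq (pivotal n p S) 0) => // /bal[card_S _].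
  by rewrite card_S eqxx in wrong_size.
move=> S /bal[_ prefix_S] i1 i2 /andP[le _].
exact/ltW/(interval_disc_of_prefix_disc prefix_S).
Qed.

Lemma scaled_disc_bounds (F : realFieldType) (K c L : nat) (D : F) : (0 < K)%N ->
  K%:R * D < 2 * K%:R - 2 -> `|c%:R - L%:R / K%:R| <= D ->
  (K * c + 2 < L + 2 * K)%N /\ (L + 2 < K * c + 2 * K)%N.
Proof.
move=> K0 KD; rewrite ler_norml => /andP[lo hi].
have K0' : 0 < K%:R :> F by rewrite ltr0n.
have scale : K%:R * (c%:R - L%:R / K%:R) = K%:R * c%:R - L%:R :> F.
  by rewrite mulrBr mulrCA divff ?mulr1 // gt_eqF.
have := ler_wpM2l (ltW K0') lo; have := ler_wpM2l (ltW K0') hi; rewrite scale.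
by move=> ? ?; split; rewrite -(ltr_nat F) !natrD !natrM; lra.
Qed.

Lemma window_misses_residue (T : finType) (A : {set T}) (f : T -> nat) (K : nat) :
  (2 <= K)%N -> (forall x y, x \in A -> y \in A -> (f y <= f x + (K - 2))%N) ->
  exists r : 'I_K, forall x, x \in A -> (f x %% K)%N != r.
Proof.
move=> K2 window; have K0 : (0 < K)%N by apply: leq_trans K2.
case: (set_0Vmem A) => [-> | [x0 x0A]]; first by exists (Ordinal K0) => x; rewrite inE.
case: (arg_minnP f x0A) => xm xmA minf.
have r_lt : ((f xm + (K - 1)) %% K < K)%N by rewrite ltn_mod.
exists (Ordinal r_lt) => x xA; apply/negP => /eqP /= fx_r.
have /andP[_ fx_le] : (f xm <= f x <= f xm + (K - 2))%N by rewrite minf // window.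
move: fx_r; rewrite -(subnKC (minf x xA)) => /eqP; rewrite eqn_modDl => /eqP.
by rewrite !modn_small; lia.
Qed.

Section MissingResidue.
Variables (R : realType) (n K : nat) (D : R) (S : {set 'I_n}).
Hypotheses (K2 : (2 <= K)%N) (KD : K%:R * D < 2 * K%:R - 2).
Hypothesis S_disc : forall i1 i2 : nat, (i1 <= i2 < n)%N ->
  `|#|S :&: Defs.interval n i1 i2|%:R - (i2.+1 - i1)%:R / K%:R| <= D.

Lemma interval_count_bounds (i1 i2 : nat) : (i1 <= i2 < n)%N ->
  (K * (prefix_card S i2.+1 - prefix_card S i1) + 2 < i2.+1 - i1 + 2 * K)%N /\
  (i2.+1 - i1 + 2 < K * (prefix_card S i2.+1 - prefix_card S i1) + 2 * K)%N.
Proof.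
move=> range; apply: (scaled_disc_bounds (D := D)) => //; first exact: leq_trans K2.
by rewrite -card_setI_interval; [exact: S_disc | case/andP: range => /leqW].
Qed.

(* [residue_shift z] is congruent to z mod K, and applying [interval_count_bounds] to
   [x, y] and to [x + 1, y - 1] for two keys x < y of S shows that it varies by at most
   K - 2 on S. *)
Definition residue_shift (z : 'I_n) : nat := z + K * (#|S| - prefix_card S z).

Lemma residue_shift_close x y : x \in S -> y \in S -> (x < y)%N ->
  (residue_shift y <= residue_shift x + (K - 2))%N /\
  (residue_shift x <= residue_shift y + (K - 2))%N.
Proof.
move=> xS yS xy; rewrite /residue_shift.
have Px : prefix_card S x.+1 = (prefix_card S x).+1 by rewrite prefix_cardS xS addn1.
have Py : prefix_card S y.+1 = (prefix_card S y).+1 by rewrite prefix_cardS yS addn1.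
have Pxy : (prefix_card S x.+1 <= prefix_card S y)%N by apply: leq_prefix_card.
have PyS : (prefix_card S y <= #|S|)%N.
  by rewrite -(prefix_card_full S (leqnn n)) leq_prefix_card // ltnW.
have xy_range : (x <= y < n)%N by rewrite (ltnW xy) ltn_ord.
have [out_lo out_hi] := interval_count_bounds xy_range.
have inner : (x.+2 <= y)%N ->
    (K * (prefix_card S y - prefix_card S x.+1) + 2 < y - x.+1 + 2 * K)%N /\
    (y - x.+1 + 2 < K * (prefix_card S y - prefix_card S x.+1) + 2 * K)%N.
  move=> x2y; have y0 : (0 < y)%N by apply: leq_ltn_trans xy.
  have := @interval_count_bounds x.+1 y.-1; rewrite prednK //; apply.
  by have := ltn_ord y; lia.
rewrite Px in Pxy inner; rewrite Py in out_lo out_hi.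
move: (prefix_card S x) (prefix_card S y) Pxy PyS out_lo out_hi inner.
move=> a b ab bS out_lo out_hi inner.
have [d bd] : exists d, b = (a.+1 + d)%N by exists (b - a.+1)%N; lia.
subst b.
have e1 : (K * ((a.+1 + d).+1 - a) = K * d + 2 * K)%N.
  by rewrite (_ : (_ - a = d + 2)%N) ?mulnDr 1?mulnC //; lia.
have e2 : (K * (a.+1 + d - a.+1) = K * d)%N by rewrite addKn.
have e3 : (K * (#|S| - a) = K * (#|S| - (a.+1 + d)) + K * d + K)%N.
  by rewrite -mulnDr -[X in (_ + X)%N]muln1 -mulnDr; congr (K * _)%N; lia.
rewrite e1 in out_lo out_hi; rewrite e2 in inner; rewrite e3.
case: (leqP x.+2 y) => [/inner [] | yx]; first by lia.
lia.
Qed.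

Lemma missing_residue : exists r : 'I_K, forall i, i \in S -> (i %% K)%N != r.
Proof.
have window x y : x \in S -> y \in S -> (residue_shift y <= residue_shift x + (K - 2))%N.
  move=> xS yS; case: (ltngtP x y) => [xy | yx | /val_inj ->]; last by rewrite leq_addr.
    by case: (residue_shift_close xS yS xy).
  by case: (residue_shift_close yS xS yx).
have [r miss] := window_misses_residue K2 window.
by exists r => i /miss; rewrite /residue_shift addnC mulnC modnMDl.
Qed.

End MissingResidue.

Lemma exists_large_modulus (R : realType) (D : R) : D < 2 ->
  exists K : nat, (2 <= K)%N /\ K%:R * D < 2 * K%:R - 2.
Proof.
move=> D2; have gap : 0 < 2 - D by rewrite subr_gt0.
pose b := Num.bound (2 / (2 - D)).
have b_gt : 2 / (2 - D) < b%:R by apply: archi_boundP; rewrite divr_ge0 // ltW.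
exists (b + 2)%N; split; first by rewrite leq_addl.
have : 2 < b%:R * (2 - D) by rewrite -ltr_pdivrMr.
have : b%:R * (2 - D) <= (b + 2)%:R * (2 - D) by rewrite ler_wpM2r ?ler_nat ?leq_addr // ltW.
lra.
Qed.

Lemma valid_probs_uniform (R : realType) (s K : nat) : (0 < K)%N ->
  valid_probs (fun _ : 'I_(s * K) => K%:R^-1 : R).
Proof.
move=> K0; have K0' : 0 < K%:R :> R by rewrite ltr0n.
split=> [i | ]; first by rewrite invr_ge0 ltW //= invr_le1 ?unitfE ?gt_eqF // ler1n.
exists s; rewrite sumr_const card_ord -(mulr_natr K%:R^-1) (natrM _ s K).
by rewrite mulrCA mulVf ?mulr1 // gt_eqF.
Qed.

Lemma card_residue_class (s K : nat) (r : 'I_K) :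
  (s <= #|[set i : 'I_(s * K) | (i %% K)%N == r]|)%N.
Proof.
have lt j : (j < s)%N -> (j * K + r < s * K)%N.
  by move=> js; have := ltn_ord r; nia.
pose f (j : 'I_s) : 'I_(s * K) := Ordinal (lt j (ltn_ord j)).
have f_inj : injective f.
  move=> j j' /(congr1 val) /= /eqP.
  by rewrite eqn_add2r eqn_pmul2r ?(leq_ltn_trans _ (ltn_ord r)) // => /eqP /val_inj.
rewrite -[X in (X <= _)%N](card_ord s) -cardsT -(card_imset _ f_inj).
apply: subset_leq_card; apply/subsetP => i /imsetP [j _ ->].
by rewrite inE /= modnMDl modn_small.
Qed.

Lemma Pr_cover_ge1 (R : realType) (n : nat) (I : finType) (mu : {set 'I_n} -> R)
    (E : I -> pred {set 'I_n}) :
  is_sample_distr mu -> (forall S, mu S != 0 -> exists r, E r S) ->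
  1 <= \sum_r Pr mu (E r).
Proof.
move=> [mu0 mu1] cover; rewrite -mu1.
rewrite (eq_bigr (fun r => \sum_S (if E r S then mu S else 0))); last first.
  by move=> r _; rewrite /Pr big_mkcond.
rewrite exchange_big /=; apply: ler_sum => S _.
have [->|/cover [r ErS]] := eqVneq (mu S) 0; first by apply: sumr_ge0 => r _; case: ifP.
rewrite (bigD1 r) //= ErS lerDl; apply: sumr_ge0 => r' _; case: ifP => // _; exact: mu0.
Qed.

Lemma expn_bernoulli a s : (a ^ s * (a + s) <= (a + 1) ^ s * a)%N.
Proof.
elim: s => [|s IH]; first by rewrite !expn0 !mul1n addn0.
rewrite !expnS; have := leq_mul (leqnn (a + 1)) IH.
by move: (a ^ s)%N ((a + 1) ^ s)%N => X Y; nia.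
Qed.

Lemma expn_pred_lt K : (2 <= K)%N -> (K * (K - 1) ^ (K * K) < K ^ (K * K))%N.
Proof.
move=> K2; have := expn_bernoulli (K - 1) (K * K).
rewrite (_ : (K - 1 + 1 = K)%N); last by lia.
have : (0 < (K - 1) ^ (K * K))%N by rewrite expn_gt0 subn_gt0 K2.
move: ((K - 1) ^ (K * K))%N => X X0 le.
rewrite -(ltn_pmul2r (_ : (0 < K - 1)%N)); last by lia.
by apply: leq_trans le; nia.
Qed.

Lemma no_varopt_interval_disc_lt2 (R : realType) (D : R) : D < 2 ->
  exists (n : nat) (p : 'I_n -> R), (1 <= n)%N /\ valid_probs p /\
    forall mu : {set 'I_n} -> R,
      is_sample_distr mu -> is_varopt mu p -> ~ interval_disc_le mu p D.
Proof.
move=> D2; have [K [K2 KD]] := exists_large_modulus D2.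
have K0 : (0 < K)%N by apply: leq_trans K2.
have K0' : 0 < K%:R :> R by rewrite ltr0n.
pose s := (K * K)%N; pose A (r : 'I_K) := [set i : 'I_(s * K) | (i %% K)%N == r].
exists (s * K)%N, (fun _ => K%:R^-1); split; first by rewrite !muln_gt0 K0.
split; first exact: valid_probs_uniform.
move=> mu mu_distr [_ _ mu_neg] mu_disc.
have cover : 1 <= \sum_(r : 'I_K) Pr mu (fun S => [disjoint A r & S]).
  apply: Pr_cover_ge1 => // S /mu_disc S_disc.
  have [|r miss] := missing_residue K2 KD (S := S).
    move=> i1 i2 range; have := S_disc i1 i2 range.
    case/andP: range => le lt; rewrite sumr_const card_interval ?leqW //.
    by rewrite -(mulr_natr K%:R^-1) mulrC.
  exists r; rewrite disjoint_subset; apply/subsetP => i; rewrite !inE => /eqP ri.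
  by apply/negP => /miss; rewrite ri eqxx.
have small : \sum_(r : 'I_K) Pr mu (fun S => [disjoint A r & S])
    <= K%:R * (1 - K%:R^-1) ^+ s.
  rewrite mulr_natl -[in X in _ *+ X](card_ord K) -sumr_const; apply: ler_sum => r _.
  apply: le_trans (mu_neg (A r)).2 _; rewrite prodr_const.
  apply: ler_wiXn2l; last exact: card_residue_class.
    by rewrite subr_ge0 invr_le1 ?unitfE ?gt_eqF // ler1n.
  by rewrite lerBlDr lerDl invr_ge0 ltW.
have : K%:R * (1 - K%:R^-1) ^+ s < 1 :> R.
  have -> : 1 - K%:R^-1 = (K - 1)%:R / K%:R :> R.
    by rewrite natrB ?mulrBl ?divff ?mul1r ?gt_eqF // ltnW.
  rewrite expr_div_n -!natrX mulrA -natrM.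
  rewrite ltr_pdivrMr ?mul1r ?ltr_nat ?ltr0n ?expn_gt0 ?K0 //.
  exact: expn_pred_lt.
lra.
Qed.

Theorem theorem1 (R : realType) :
  (forall (n : nat), (1 <= n)%N -> forall p : 'I_n -> R, valid_probs p ->
     exists mu : {set 'I_n} -> R,
       [/\ is_sample_distr mu, is_varopt mu p & interval_disc_le mu p 2]) /\
  (forall D : R, D < 2 ->
     exists (n : nat) (p : 'I_n -> R), (1 <= n)%N /\ valid_probs p /\
       forall mu : {set 'I_n} -> R,
         is_sample_distr mu -> is_varopt mu p -> ~ interval_disc_le mu p D).
Proof.
split=> [n _ p | D].
  exact: exists_varopt_interval_disc_le2.
exact: no_varopt_interval_disc_lt2.
Qed.
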